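(* Let $H^{(2)}_n=\sum_{0<j\leqslant n}1/j^2$ for $n=0,1,2,\ldots$ (so $H^{(2)}_0=0$), and let $(F_n)_{n\geqslant0}$, $(L_n)_{n\geqslant0}$ be the Fibonacci and Lucas numbers. For $k\geqslant0$ define $$u_k=\begin{cases}5^{k/2}F_k & \text{if } 2\mid k,\\ 5^{(k-1)/2}L_k & \text{if } 2\nmid k,\end{cases}\qquad v_k=\begin{cases}5^{k/2}L_k & \text{if } 2\mid k,\\ 5^{(k+1)/2}F_k & \text{if } 2\nmid k.\end{cases}$$ Then: (i) $$\sum_{k=1}^\infty\frac{H_{k-1}^{(2)}}{k^2\binom{2k}k}=\frac{\pi^4}{1944},$$ $$\sum_{k=1}^\infty\frac{L_{2k}H_{k-1}^{(2)}}{k^2\binom{2k}k}=\frac{41\pi^4}{7500},\qquad \sum_{k=1}^\infty\frac{F_{2k}H_{k-1}^{(2)}}{k^2\binom{2k}k}=\frac{2\pi^4}{375\sqrt5},$$ $$\sum_{k=1}^\infty\frac{v_kH_{k-1}^{(2)}}{k^2\binom{2k}k}=\frac{34\pi^4}{1875},\qquad \sum_{k=1}^\infty\frac{u_kH_{k-1}^{(2)}}{k^2\binom{2k}k}=\frac{2\pi^4}{125\sqrt5}.$$ (ii) For every real $x$ with $0\leqslant x<4$, $$\sum_{k=1}^\infty\frac{H_{k-1}^{(2)}x^k}{k\binom{2k}k}=\frac43\sqrt{\frac{x}{4-x}}\,\arcsin^3\frac{\sqrt x}2.$$ In particular, $$\sum_{k=1}^\infty\frac{H_{k-1}^{(2)}}{k\binom{2k}k}=\frac{\pi^3}{162\sqrt3}\qquad\text{and}\qquad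 \sum_{k=1}^\infty\frac{3^kH_{k-1}^{(2)}}{k\binom{2k}k}=\frac{4\pi^3}{27\sqrt3}.$$
   Context: Fibonacci numbers: $F_0=0$, $F_1=1$, $F_{n+1}=F_n+F_{n-1}$ for $n\geqslant1$. Lucas numbers: $L_0=2$, $L_1=1$, $L_{n+1}=L_n+L_{n-1}$ for $n\geqslant1$. $H^{(2)}_n$ is the second-order harmonic number $\sum_{0<j\leqslant n}1/j^2$. *)

From Stdlib Require Import Reals Lra Lia.
From Coquelicot Require Import Coquelicot.
Open Scope R_scope.

Fixpoint fib (n : nat) : nat :=
  match n with
  | O => 0%nat
  | S m => match m with
           | O => 1%nat
           | S p => (fib m + fib p)%nat
           end
  end.

Fixpoint lucas (n : nat) : nat :=
  match n with
  | O => 2%nat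
  | S m => match m with
           | O => 1%nat
           | S p => (lucas m + lucas p)%nat
           end
  end.

Fixpoint H2 (n : nat) : R :=
  match n with
  | O => 0
  | S m => H2 m + 1 / (INR (S m))^2
  end.

Definition cbin (k : nat) : R := Binomial.C (2 * k) k.

Definition u_seq (k : nat) : R :=
  if Nat.even k then 5 ^ (k / 2) * INR (fib k)
  else 5 ^ ((k - 1) / 2) * INR (lucas k).

Definition v_seq (k : nat) : R :=
  if Nat.even k then 5 ^ (k / 2) * INR (lucas k)
  else 5 ^ ((k + 1) / 2) * INR (fib k).

Definition sum_from1_is (a : nat -> R) (l : R) : Prop :=
  is_series (fun n : nat => a (S n)) l.

(* Along [x = 4 sin^2 t] the operator [D = x (4 - x) d^2/dx^2 + (2 - x) d/dx]
   becomes [1/4 d^2/dt^2].  The coefficients [q_k = 1 / (2 k^2 C(2k,k))] and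
   [a_k = H2(k-1) / (k^2 C(2k,k))] satisfy [D (sum q_k x^k) = 1/2] and
   [D (sum a_k x^k) = 2 sum q_k x^k], so as functions of [t] the two series solve
   [g'' = 2], [f'' = 8 g] with zero initial data: [sum q_k x^k = t^2] and
   [sum a_k x^k = 2 t^4 / 3].  Part (ii) is [x d/dx] of the latter.  The
   Fibonacci and Lucas sums follow by Binet's formula, since [4 sin^2 t] equals
   [phi^2, psi^2, sqrt 5 phi, - sqrt 5 psi] at [t = 3pi/10, pi/10, 2pi/5, pi/5]. *)

From Stdlib Require Import Reals Lra Lia Factorial.
From Coquelicot Require Import Coquelicot.
Open Scope R_scope.

Lemma cbin_fact k : cbin k = INR (fact (2 * k)) / (INR (fact k) * INR (fact k)).
Proof. unfold cbin, Binomial.C. now replace (2 * k - k)%nat with k by lia. Qed.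

Lemma cbin_0 : cbin 0 = 1.
Proof. rewrite cbin_fact. simpl. field. Qed.

Lemma cbin_pos k : 0 < cbin k.
Proof.
  rewrite cbin_fact.
  pose proof (lt_0_INR _ (lt_O_fact (2 * k))); pose proof (lt_0_INR _ (lt_O_fact k)).
  apply Rdiv_lt_0_compat; nra.
Qed.

Lemma cbin_S k : cbin (S k) = 2 * (2 * INR k + 1) / (INR k + 1) * cbin k.
Proof.
  rewrite !cbin_fact. replace (2 * S k)%nat with (S (S (2 * k))) by lia.
  rewrite !fact_simpl, !mult_INR, !S_INR, mult_INR.
  pose proof (lt_0_INR _ (lt_O_fact k)); pose proof (pos_INR k).
  simpl. field. lra.
Qed.

Lemma pow4_le_cbin k : 4 ^ k <= (2 * INR k + 1) * cbin k.
Proof.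
  induction k as [|k IH].
  - rewrite cbin_0. simpl. lra.
  - rewrite cbin_S, S_INR. pose proof (pos_INR k). pose proof (cbin_pos k).
    replace ((2 * (INR k + 1) + 1) * (2 * (2 * INR k + 1) / (INR k + 1) * cbin k))
      with (4 * ((2 * INR k + 1) * cbin k) + 2 * (2 * INR k + 1) / (INR k + 1) * cbin k)
      by (field; lra).
    assert (0 <= 2 * (2 * INR k + 1) / (INR k + 1) * cbin k).
    { apply Rmult_le_pos; [apply Rlt_le, Rdiv_lt_0_compat|]; lra. }
    simpl. lra.
Qed.

Lemma H2_S n : H2 (S n) = H2 n + 1 / INR (S n) ^ 2.
Proof. reflexivity. Qed.

Lemma H2_nonneg n : 0 <= H2 n.
Proof.
  induction n as [|n IH]; [simpl; lra|]. rewrite H2_S.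
  assert (0 < 1 / INR (S n) ^ 2) by (apply Rdiv_lt_0_compat, pow_lt, lt_0_INR; lia || lra).
  lra.
Qed.

Lemma H2_le n : H2 n <= INR n.
Proof.
  induction n as [|n IH]; [simpl; lra|]. rewrite H2_S, S_INR.
  pose proof (pos_INR n).
  assert (1 / (INR n + 1) ^ 2 <= 1).
  { apply Rmult_le_reg_r with ((INR n + 1) ^ 2); [nra|].
    unfold Rdiv. rewrite Rmult_assoc, Rinv_l; nra. }
  lra.
Qed.

Lemma CV_radius_ge_of_bounded (a : nat -> R) (r M : R) :
  (forall n, Rabs (a n * r ^ n) <= M) -> Rbar_le r (CV_radius a).
Proof. intros HM. apply (proj1 (CV_radius_bounded a)). now exists M. Qed.

Lemma sin_sq t : sin t ^ 2 = 1 - cos t ^ 2.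
Proof. pose proof (sin2_cos2 t). unfold Rsqr in *. nra. Qed.

Lemma Rabs_4sin2_lt t : -(PI/2) < t < PI/2 -> Rabs (4 * sin t ^ 2) < 4.
Proof.
  intros Ht. pose proof (cos_gt_0 t (proj1 Ht) (proj2 Ht)). pose proof (sin_sq t).
  rewrite Rabs_right; nra.
Qed.

Lemma Rabs_4sin2_lt_radius c t : Rbar_le 4 (CV_radius c) -> -(PI/2) < t < PI/2 ->
  Rbar_lt (Rabs (4 * sin t ^ 2)) (CV_radius c).
Proof.
  intros Hc Ht. eapply Rbar_lt_le_trans; [|exact Hc]. now apply Rabs_4sin2_lt.
Qed.

(* Coefficients of [D f = x (4 - x) f'' + (2 - x) f'] for [f = PSeries c]. *)
Definition sin2_op (c : nat -> R) (n : nat) : R :=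
  2 * (INR n + 1) * (2 * INR n + 1) * c (S n) - INR n ^ 2 * c n.

Ltac solve_ex_pseries := match goal with
  | |- ex_pseries (PS_minus _ _) _ => apply ex_pseries_minus; solve_ex_pseries
  | |- ex_pseries (PS_plus _ _) _ => apply ex_pseries_plus; solve_ex_pseries
  | |- ex_pseries (PS_incr_1 _) _ => apply ex_pseries_incr_1; solve_ex_pseries
  | |- ex_pseries (PS_scal _ _) _ => apply ex_pseries_scal; [apply Rmult_comm | solve_ex_pseries]
  | _ => assumption
  end.

Lemma PSeries_sin2_op c x : Rbar_lt (Rabs x) (CV_radius c) ->
  (2 - x) * PSeries (PS_derive c) x + x * (4 - x) * PSeries (PS_derive (PS_derive c)) x
  = PSeries (sin2_op c) x.
Proof.
  intros Hx.
  set (c1 := PS_derive c); set (c2 := PS_derive c1).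
  assert (e1 : ex_pseries c1 x)
    by (apply CV_radius_inside; unfold c1; now rewrite CV_radius_derive).
  assert (e2 : ex_pseries c2 x)
    by (apply CV_radius_inside; unfold c2, c1; now rewrite !CV_radius_derive).
  rewrite (PSeries_ext (sin2_op c) (PS_plus (PS_minus (PS_scal 2 c1) (PS_incr_1 c1))
      (PS_minus (PS_scal 4 (PS_incr_1 c2)) (PS_incr_1 (PS_incr_1 c2))))).
  - rewrite PSeries_plus, !PSeries_minus by solve_ex_pseries.
    rewrite !PSeries_scal, !PSeries_incr_1. ring.
  - intros n. unfold PS_plus, PS_minus, PS_opp, PS_scal, sin2_op, c2, c1, PS_derive.
    destruct n as [|[|n]]; cbn -[INR]; unfold plus, opp, scal, zero, mult; cbn -[INR];
      rewrite ?S_INR; simpl; ring.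
Qed.

Lemma is_derive_PSeries_sin2 c t : Rbar_le 4 (CV_radius c) -> -(PI/2) < t < PI/2 ->
  is_derive (fun t => PSeries c (4 * sin t ^ 2)) t
    (PSeries (PS_derive c) (4 * sin t ^ 2) * (8 * sin t * cos t)).
Proof.
  intros Hc Ht.
  assert (Hx : is_derive (fun t => 4 * sin t ^ 2) t (8 * sin t * cos t))
    by (auto_derive; [auto | ring]).
  pose proof (is_derive_comp (PSeries c) _ t _ _
    (is_derive_PSeries c _ (Rabs_4sin2_lt_radius c t Hc Ht)) Hx) as H.
  unfold scal in H; simpl in H; unfold mult in H; simpl in H.
  now rewrite Rmult_comm.
Qed.

Lemma is_derive2_PSeries_sin2 c t : Rbar_le 4 (CV_radius c) -> -(PI/2) < t < PI/2 ->
  is_derive (fun t => PSeries (PS_derive c) (4 * sin t ^ 2) * (8 * sin t * cos t)) t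
    (4 * PSeries (sin2_op c) (4 * sin t ^ 2)).
Proof.
  intros Hc Ht.
  assert (Hc' : Rbar_le 4 (CV_radius (PS_derive c))) by now rewrite CV_radius_derive.
  assert (Hsc : is_derive (fun t => 8 * sin t * cos t) t (8 * (cos t ^ 2 - sin t ^ 2)))
    by (auto_derive; [auto | ring]).
  pose proof (is_derive_mult _ _ t _ _ (is_derive_PSeries_sin2 _ t Hc' Ht) Hsc Rmult_comm) as H.
  replace (4 * _) with (plus
    (mult (PSeries (PS_derive (PS_derive c)) (4 * sin t ^ 2) * (8 * sin t * cos t))
      (8 * sin t * cos t))
    (mult (PSeries (PS_derive c) (4 * sin t ^ 2)) (8 * (cos t ^ 2 - sin t ^ 2)))); [exact H|].
  rewrite <- (PSeries_sin2_op c _ (Rabs_4sin2_lt_radius c t Hc Ht)).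
  unfold plus, mult; cbn -[pow PSeries sin cos].
  set (P1 := PSeries (PS_derive c) _); set (P2 := PSeries (PS_derive (PS_derive c)) _).
  transitivity (64 * P2 * sin t ^ 2 * cos t ^ 2 + 8 * P1 * (cos t ^ 2 - sin t ^ 2)); [ring|].
  replace (cos t ^ 2) with (1 - sin t ^ 2) by (rewrite sin_sq; ring). ring.
Qed.

Lemma is_derive_0_constant (g : R -> R) (a : R) :
  (forall t, -a < t < a -> is_derive g t 0) -> forall t, -a < t < a -> g t = g 0.
Proof.
  intros Hg t Ht.
  destruct (Rtotal_order t 0) as [Hlt | [-> | Hgt]]; [| reflexivity |].
  - apply (eq_is_derive g t 0); [intros s Hs; apply Hg; lra | exact Hlt].
  - symmetry. apply (eq_is_derive g 0 t); [intros s Hs; apply Hg; lra | exact Hgt].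
Qed.

Lemma ode2_unique (f f' F F' h : R -> R) (a : R) :
  (forall t, -a < t < a -> is_derive f t (f' t) /\ is_derive f' t (h t)
     /\ is_derive F t (F' t) /\ is_derive F' t (h t)) ->
  f 0 = F 0 -> f' 0 = F' 0 ->
  forall t, -a < t < a -> f t = F t /\ f' t = F' t.
Proof.
  intros Hd H0 H1.
  assert (E1 : forall t, -a < t < a -> f' t - F' t = f' 0 - F' 0).
  { apply (is_derive_0_constant (fun t => f' t - F' t)). intros t Ht.
    destruct (Hd t Ht) as (_ & A & _ & B).
    replace 0 with (h t - h t) by ring. now apply (is_derive_minus f' F'). }
  assert (E2 : forall t, -a < t < a -> f t - F t = f 0 - F 0).
  { apply (is_derive_0_constant (fun t => f t - F t)). intros t Ht.
    destruct (Hd t Ht) as (A & _ & B & _).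
    replace 0 with (f' t - F' t) by (rewrite E1; auto; lra).
    now apply (is_derive_minus f F). }
  intros t Ht. specialize (E1 t Ht). specialize (E2 t Ht). lra.
Qed.

(* At [n = 0] both coefficients are [0], since [/ 0 = 0]. *)
Definition asin2_coef (n : nat) : R := / (2 * INR n ^ 2 * cbin n).
Definition asin4_coef (n : nat) : R := H2 (n - 1) / (INR n ^ 2 * cbin n).

Lemma asin2_coef_0 : asin2_coef 0 = 0.
Proof.
  unfold asin2_coef. replace (2 * INR 0 ^ 2 * cbin 0) with 0 by (simpl; ring). apply Rinv_0.
Qed.

Lemma asin4_coef_0 : asin4_coef 0 = 0.
Proof.
  unfold asin4_coef, Rdiv. replace (INR 0 ^ 2 * cbin 0) with 0 by (simpl; ring).
  rewrite Rinv_0. ring.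
Qed.

Lemma sq_mul_cbin_pos n : (0 < n)%nat -> 0 < INR n ^ 2 * cbin n.
Proof. intros Hn. apply Rmult_lt_0_compat; [apply pow_lt, lt_0_INR | apply cbin_pos]; lia. Qed.

Lemma pow4_div_cbin_le n : (0 < n)%nat -> 4 ^ n / (INR n ^ 2 * cbin n) <= 3 / INR n.
Proof.
  intros Hn. pose proof (lt_0_INR _ Hn). pose proof (sq_mul_cbin_pos n Hn).
  pose proof (cbin_pos n). pose proof (pow4_le_cbin n).
  assert (0 < INR n ^ 2) by (apply pow_lt; lra).
  apply Rle_trans with ((2 * INR n + 1) * cbin n / (INR n ^ 2 * cbin n)).
  - apply Rmult_le_compat_r; [apply Rlt_le, Rinv_0_lt_compat | ]; lra.
  - replace ((2 * INR n + 1) * cbin n / (INR n ^ 2 * cbin n)) with ((2 * INR n + 1) / INR n ^ 2)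
      by (field; lra).
    assert (1 <= INR n) by (apply (le_INR 1); lia).
    apply Rmult_le_reg_r with (INR n ^ 2); [lra|].
    unfold Rdiv. rewrite Rmult_assoc, Rinv_l by lra.
    replace (3 * / INR n * INR n ^ 2) with (3 * INR n) by (field; lra). lra.
Qed.

Lemma CV_radius_asin2_coef : Rbar_le 4 (CV_radius asin2_coef).
Proof.
  apply (CV_radius_ge_of_bounded _ 4 3). intros [|n].
  - rewrite asin2_coef_0, Rmult_0_l, Rabs_R0. lra.
  - pose proof (pow4_div_cbin_le (S n) (Nat.lt_0_succ n)).
    pose proof (sq_mul_cbin_pos (S n) (Nat.lt_0_succ n)). pose proof (cbin_pos (S n)).
    assert (1 <= INR (S n)) by (apply (le_INR 1); lia).
    assert (3 / INR (S n) <= 3).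
    { apply Rmult_le_reg_r with (INR (S n)); [lra|].
      unfold Rdiv. rewrite Rmult_assoc, Rinv_l; lra. }
    assert (0 < 4 ^ S n) by (apply pow_lt; lra).
    unfold asin2_coef. rewrite Rabs_right.
    + replace (/ (2 * INR (S n) ^ 2 * cbin (S n)) * 4 ^ S n)
        with (/ 2 * (4 ^ S n / (INR (S n) ^ 2 * cbin (S n)))) by (field; lra).
      lra.
    + apply Rle_ge, Rmult_le_pos; [apply Rlt_le, Rinv_0_lt_compat | ]; lra.
Qed.

Lemma CV_radius_asin4_coef : Rbar_le 4 (CV_radius asin4_coef).
Proof.
  apply (CV_radius_ge_of_bounded _ 4 3). intros [|n].
  - rewrite asin4_coef_0, Rmult_0_l, Rabs_R0. lra.
  - pose proof (pow4_div_cbin_le (S n) (Nat.lt_0_succ n)) as Hq.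
    pose proof (sq_mul_cbin_pos (S n) (Nat.lt_0_succ n)) as Hd.
    pose proof (cbin_pos (S n)) as Hc.
    pose proof (H2_nonneg n) as Hnn. pose proof (H2_le n) as Hle.
    assert (Hn : 1 <= INR (S n)) by (apply (le_INR 1); lia).
    assert (Hq0 : 0 <= 4 ^ S n / (INR (S n) ^ 2 * cbin (S n)))
      by (apply Rlt_le, Rdiv_lt_0_compat; [apply pow_lt|]; lra).
    unfold asin4_coef. replace (S n - 1)%nat with n by lia.
    replace (H2 n / (INR (S n) ^ 2 * cbin (S n)) * 4 ^ S n)
      with (H2 n * (4 ^ S n / (INR (S n) ^ 2 * cbin (S n)))) by (field; lra).
    rewrite Rabs_right by (apply Rle_ge, Rmult_le_pos; lra).
    apply Rle_trans with (INR (S n) * (3 / INR (S n))).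
    + rewrite S_INR in *. apply Rmult_le_compat; lra.
    + right. field. lra.
Qed.

Lemma sin2_op_asin2_coef n : sin2_op asin2_coef n = if Nat.eqb n 0 then 1 / 2 else 0.
Proof.
  unfold sin2_op. destruct n as [|n].
  - rewrite asin2_coef_0. unfold asin2_coef. rewrite (cbin_S 0), cbin_0. simpl. field.
  - unfold asin2_coef. rewrite (cbin_S (S n)).
    pose proof (cbin_pos (S n)). rewrite !S_INR. pose proof (pos_INR n).
    cbn -[INR cbin]. field. lra.
Qed.

Lemma sin2_op_asin4_coef n : sin2_op asin4_coef n = 2 * asin2_coef n.
Proof.
  unfold sin2_op. destruct n as [|n].
  - rewrite asin4_coef_0, asin2_coef_0. unfold asin4_coef. simpl. unfold Rdiv. ring.
  - unfold asin4_coef, asin2_coef. replace (S (S n) - 1)%nat with (S n) by lia.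
    replace (S n - 1)%nat with n by lia.
    rewrite (cbin_S (S n)), H2_S.
    pose proof (cbin_pos (S n)). rewrite !S_INR. pose proof (pos_INR n).
    field. lra.
Qed.

Lemma PSeries_sin2_op_asin2_coef x : Rabs x < 4 -> PSeries (sin2_op asin2_coef) x = 1 / 2.
Proof.
  intros Hx.
  rewrite (PSeries_ext _ (fun n => if Nat.eqb n 0 then 1 / 2 else 0)) by apply sin2_op_asin2_coef.
  rewrite PSeries_decr_1.
  - rewrite (PSeries_ext _ (fun _ => 0)) by reflexivity.
    rewrite PSeries_const_0. simpl. ring.
  - apply CV_radius_inside. eapply Rbar_lt_le_trans; [|apply (CV_radius_ge_of_bounded _ 4 1)].
    + exact Hx.
    + intros [|n]; simpl; rewrite ?Rmult_0_l, ?Rabs_R0, ?Rmult_1_r; try lra.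
      rewrite Rabs_right; lra.
Qed.

Lemma PSeries_asin2_coef_sin2 t : -(PI/2) < t < PI/2 ->
  PSeries asin2_coef (4 * sin t ^ 2) = t ^ 2 /\
  PSeries (PS_derive asin2_coef) (4 * sin t ^ 2) * (8 * sin t * cos t) = 2 * t.
Proof.
  apply (ode2_unique (fun t => PSeries asin2_coef (4 * sin t ^ 2))
     (fun t => PSeries (PS_derive asin2_coef) (4 * sin t ^ 2) * (8 * sin t * cos t))
     (fun t => t ^ 2) (fun t => 2 * t) (fun _ => 2)).
  - intros s Hs. split; [|split; [|split]].
    + exact (is_derive_PSeries_sin2 _ s CV_radius_asin2_coef Hs).
    + replace 2 with (4 * PSeries (sin2_op asin2_coef) (4 * sin s ^ 2))
        by (rewrite PSeries_sin2_op_asin2_coef by (now apply Rabs_4sin2_lt); field).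
      exact (is_derive2_PSeries_sin2 _ s CV_radius_asin2_coef Hs).
    + auto_derive; auto; ring.
    + auto_derive; auto; ring.
  - rewrite sin_0. replace (4 * 0 ^ 2) with 0 by ring. rewrite PSeries_0, asin2_coef_0. ring.
  - rewrite sin_0. ring.
Qed.

Lemma PSeries_asin4_coef_sin2 t : -(PI/2) < t < PI/2 ->
  PSeries asin4_coef (4 * sin t ^ 2) = 2 / 3 * t ^ 4 /\
  PSeries (PS_derive asin4_coef) (4 * sin t ^ 2) * (8 * sin t * cos t) = 8 / 3 * t ^ 3.
Proof.
  apply (ode2_unique (fun t => PSeries asin4_coef (4 * sin t ^ 2))
     (fun t => PSeries (PS_derive asin4_coef) (4 * sin t ^ 2) * (8 * sin t * cos t))
     (fun t => 2 / 3 * t ^ 4) (fun t => 8 / 3 * t ^ 3) (fun t => 8 * t ^ 2)).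
  - intros s Hs. split; [|split; [|split]].
    + exact (is_derive_PSeries_sin2 _ s CV_radius_asin4_coef Hs).
    + replace (8 * s ^ 2) with (4 * PSeries (sin2_op asin4_coef) (4 * sin s ^ 2)).
      * exact (is_derive2_PSeries_sin2 _ s CV_radius_asin4_coef Hs).
      * rewrite (PSeries_ext _ (PS_scal 2 asin2_coef)) by apply sin2_op_asin4_coef.
        rewrite PSeries_scal, (proj1 (PSeries_asin2_coef_sin2 s Hs)).
        change (4 * (2 * s ^ 2) = 8 * s ^ 2). ring.
    + auto_derive; auto; field.
    + auto_derive; auto; field.
  - rewrite sin_0. replace (4 * 0 ^ 2) with 0 by ring. rewrite PSeries_0, asin4_coef_0. ring.
  - rewrite sin_0. ring.
Qed.

Lemma sum_from1_PSeries (a : nat -> R) x : a 0%nat = 0 -> Rbar_lt (Rabs x) (CV_radius a) ->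
  sum_from1_is (fun k => a k * x ^ k) (PSeries a x).
Proof.
  intros Ha0 Hx.
  pose proof (PSeries_correct a x (CV_radius_inside a x Hx)) as P.
  apply is_pseries_R in P.
  apply (is_series_incr_1 (fun n => a n * x ^ n)).
  rewrite Ha0. unfold plus; simpl. now rewrite Rmult_0_l, Rplus_0_r.
Qed.

Lemma sum_from1_ext (a b : nat -> R) l :
  (forall k, (0 < k)%nat -> a k = b k) -> sum_from1_is a l -> sum_from1_is b l.
Proof. intros E. apply is_series_ext. intros n. apply E. lia. Qed.

Lemma sum_asin4_coef_sin2 t : -(PI/2) < t < PI/2 ->
  sum_from1_is (fun k => asin4_coef k * (4 * sin t ^ 2) ^ k) (2 / 3 * t ^ 4).
Proof.
  intros Ht. rewrite <- (proj1 (PSeries_asin4_coef_sin2 t Ht)).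
  apply sum_from1_PSeries; [apply asin4_coef_0|].
  exact (Rabs_4sin2_lt_radius _ t CV_radius_asin4_coef Ht).
Qed.

Lemma sum_H2_weighted p q t1 t2 (a : nat -> R) :
  -(PI/2) < t1 < PI/2 -> -(PI/2) < t2 < PI/2 ->
  (forall k, a k = p * (4 * sin t1 ^ 2) ^ k + q * (4 * sin t2 ^ 2) ^ k) ->
  sum_from1_is (fun k => a k * H2 (k - 1) / (INR k ^ 2 * cbin k))
    (2 / 3 * (p * t1 ^ 4 + q * t2 ^ 4)).
Proof.
  intros Ht1 Ht2 Ha.
  replace (2 / 3 * (p * t1 ^ 4 + q * t2 ^ 4))
    with (p * (2 / 3 * t1 ^ 4) + q * (2 / 3 * t2 ^ 4)) by ring.
  eapply is_series_ext;
    [| apply (is_series_plus _ _ _ _ (is_series_scal p _ _ (sum_asin4_coef_sin2 t1 Ht1))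
                                     (is_series_scal q _ _ (sum_asin4_coef_sin2 t2 Ht2)))].
  intros n. rewrite Ha. unfold asin4_coef, plus, scal; simpl; unfold mult; simpl.
  unfold Rdiv. ring.
Qed.

(* The sum is [x (PSeries (PS_derive asin4_coef) x)], and [d/dt = 8 sin t cos t d/dx]. *)
Lemma sum_H2_sin2 t : -(PI/2) < t < PI/2 ->
  sum_from1_is (fun k => H2 (k - 1) * (4 * sin t ^ 2) ^ k / (INR k * cbin k))
    (4 / 3 * tan t * t ^ 3).
Proof.
  intros Ht. set (x := 4 * sin t ^ 2).
  assert (Hc : 0 < cos t) by (apply cos_gt_0; lra).
  assert (Hx : Rbar_lt (Rabs x) (CV_radius (PS_derive asin4_coef))).
  { rewrite CV_radius_derive. exact (Rabs_4sin2_lt_radius _ t CV_radius_asin4_coef Ht). }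
  pose proof (PSeries_correct _ x (CV_radius_inside _ x Hx)) as P.
  apply is_pseries_R, (is_series_scal x) in P.
  replace (4 / 3 * tan t * t ^ 3) with (x * PSeries (PS_derive asin4_coef) x).
  - eapply is_series_ext; [| exact P]. intros n.
    unfold scal; cbn -[INR pow PSeries]; unfold mult; cbn -[INR pow PSeries].
    unfold PS_derive, asin4_coef. replace (S n - 1)%nat with n by lia.
    pose proof (cbin_pos (S n)). pose proof (pos_INR n). rewrite S_INR.
    rewrite <- (tech_pow_Rmult x n), Nat.sub_0_r. field. lra.
  - pose proof (proj2 (PSeries_asin4_coef_sin2 t Ht)) as M. fold x in M.
    unfold tan, x in *.
    apply Rmult_eq_reg_r with (2 * cos t); [| lra].
    transitivity (sin t * (PSeries (PS_derive asin4_coef) (4 * sin t ^ 2) * (8 * sin t * cos t)));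
      [ring|].
    rewrite M. field. lra.
Qed.

Lemma sqrt5_sq : sqrt 5 * sqrt 5 = 5.
Proof. apply sqrt_sqrt. lra. Qed.

Lemma sqrt5_pos : 0 < sqrt 5.
Proof. apply sqrt_lt_R0. lra. Qed.

Lemma sqrt5_pow_double m : sqrt 5 ^ (2 * m) = 5 ^ m.
Proof. rewrite pow_mult. f_equal. transitivity (sqrt 5 * sqrt 5); [ring | apply sqrt5_sq]. Qed.

Definition phi : R := (1 + sqrt 5) / 2.
Definition psi : R := (1 - sqrt 5) / 2.

Lemma phi_sq : phi ^ 2 = phi + 1.
Proof. pose proof sqrt5_sq. unfold phi. nra. Qed.

Lemma psi_sq : psi ^ 2 = psi + 1.
Proof. pose proof sqrt5_sq. unfold psi. nra. Qed.

Lemma fib_lucas_binet_pair n :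
  (INR (fib n) = (phi ^ n - psi ^ n) / sqrt 5 /\ INR (lucas n) = phi ^ n + psi ^ n) /\
  (INR (fib (S n)) = (phi ^ S n - psi ^ S n) / sqrt 5 /\
   INR (lucas (S n)) = phi ^ S n + psi ^ S n).
Proof.
  pose proof sqrt5_pos.
  induction n as [|n [[F0 L0] [F1 L1]]].
  - unfold phi, psi; simpl. repeat split; field; lra.
  - split; [split; assumption|].
    change (fib (S (S n))) with (fib (S n) + fib n)%nat.
    change (lucas (S (S n))) with (lucas (S n) + lucas n)%nat.
    rewrite !plus_INR, F0, F1, L0, L1.
    replace (phi ^ S (S n)) with (phi ^ n * phi ^ 2) by (simpl; ring).
    replace (psi ^ S (S n)) with (psi ^ n * psi ^ 2) by (simpl; ring).
    rewrite phi_sq, psi_sq. simpl. split; field; lra.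
Qed.

Lemma fib_binet n : INR (fib n) = (phi ^ n - psi ^ n) / sqrt 5.
Proof. apply fib_lucas_binet_pair. Qed.

Lemma lucas_binet n : INR (lucas n) = phi ^ n + psi ^ n.
Proof. apply fib_lucas_binet_pair. Qed.

(* [cos (3 pi/5) = - cos (2 pi/5)] makes [cos (pi/5)] a root of [4 c^2 - 2 c - 1]. *)
Lemma cos_PI5 : cos (PI / 5) = phi / 2.
Proof.
  pose proof (sin_sq (PI / 5)) as Hs.
  set (c := cos (PI / 5)) in *.
  assert (Hc : 0 < c) by (apply cos_gt_0; pose proof PI_RGT_0; lra).
  assert (E : cos (PI - 2 * (PI / 5)) = cos (2 * (PI / 5) + PI / 5)) by (f_equal; field).
  rewrite Rtrigo_facts.cos_pi_minus, cos_plus, cos_2a_cos, sin_2a in E. fold c in E.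
  assert (Hquad : 4 * c ^ 2 - 2 * c - 1 = 0).
  { assert (Hf : (c + 1) * (4 * c ^ 2 - 2 * c - 1) = 0) by nra.
    apply Rmult_integral in Hf. destruct Hf; lra. }
  pose proof sqrt5_sq; pose proof sqrt5_pos. unfold phi.
  assert (Hf : (4 * c - 1 - sqrt 5) * (4 * c - 1 + sqrt 5) = 0) by nra.
  apply Rmult_integral in Hf. destruct Hf; nra.
Qed.

Lemma cos_2PI5 : cos (2 * PI / 5) = - psi / 2.
Proof.
  replace (2 * PI / 5) with (2 * (PI / 5)) by field. rewrite cos_2a_cos, cos_PI5.
  pose proof sqrt5_sq. unfold phi, psi. nra.
Qed.

Lemma four_sin2_3PI10 : 4 * sin (3 * PI / 10) ^ 2 = phi ^ 2.
Proof.
  rewrite <- cos_shift. replace (PI / 2 - 3 * PI / 10) with (PI / 5) by field.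
  rewrite cos_PI5. field.
Qed.

Lemma four_sin2_PI10 : 4 * sin (PI / 10) ^ 2 = psi ^ 2.
Proof.
  rewrite <- cos_shift. replace (PI / 2 - PI / 10) with (2 * PI / 5) by field.
  rewrite cos_2PI5. field.
Qed.

Lemma four_sin2_2PI5 : 4 * sin (2 * PI / 5) ^ 2 = sqrt 5 * phi.
Proof. rewrite sin_sq, cos_2PI5. pose proof sqrt5_sq. unfold phi, psi. nra. Qed.

Lemma four_sin2_PI5 : 4 * sin (PI / 5) ^ 2 = - (sqrt 5 * psi).
Proof. rewrite sin_sq, cos_PI5. pose proof sqrt5_sq. unfold phi, psi. nra. Qed.

Lemma opp_sqrt5_pow_double m : (- sqrt 5) ^ (2 * m) = 5 ^ m.
Proof. rewrite pow_mult. f_equal. transitivity (sqrt 5 * sqrt 5); [ring | apply sqrt5_sq]. Qed.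

Lemma v_seq_binet k : v_seq k = (sqrt 5 * phi) ^ k + (- (sqrt 5 * psi)) ^ k.
Proof.
  pose proof sqrt5_pos as Hpos. pose proof sqrt5_sq as Hsq.
  replace (- (sqrt 5 * psi)) with (- sqrt 5 * psi) by ring. rewrite !Rpow_mult_distr.
  unfold v_seq. destruct (Nat.Even_or_Odd k) as [[m ->] | [m ->]].
  - rewrite Nat.even_even, (Nat.mul_comm 2 m), Nat.div_mul, (Nat.mul_comm m 2) by lia.
    rewrite sqrt5_pow_double, opp_sqrt5_pow_double, lucas_binet. ring.
  - rewrite Nat.even_odd. replace ((2 * m + 1 + 1) / 2)%nat with (S m)
      by (replace (2 * m + 1 + 1)%nat with (S m * 2)%nat by lia; rewrite Nat.div_mul; lia).
    rewrite fib_binet, !pow_add, sqrt5_pow_double, opp_sqrt5_pow_double, <- tech_pow_Rmult.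
    set (r := sqrt 5) in *. rewrite <- Hsq. field. lra.
Qed.

Lemma u_seq_binet k : u_seq k = ((sqrt 5 * phi) ^ k - (- (sqrt 5 * psi)) ^ k) / sqrt 5.
Proof.
  pose proof sqrt5_pos as Hpos. pose proof sqrt5_sq as Hsq.
  replace (- (sqrt 5 * psi)) with (- sqrt 5 * psi) by ring. rewrite !Rpow_mult_distr.
  unfold u_seq. destruct (Nat.Even_or_Odd k) as [[m ->] | [m ->]].
  - rewrite Nat.even_even, (Nat.mul_comm 2 m), Nat.div_mul, (Nat.mul_comm m 2) by lia.
    rewrite sqrt5_pow_double, opp_sqrt5_pow_double, fib_binet. field. lra.
  - rewrite Nat.even_odd. replace ((2 * m + 1 - 1) / 2)%nat with m
      by (replace (2 * m + 1 - 1)%nat with (m * 2)%nat by lia; rewrite Nat.div_mul; lia).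
    rewrite lucas_binet, !pow_add, sqrt5_pow_double, opp_sqrt5_pow_double. field. lra.
Qed.

Lemma four_sin2_PI6 : 4 * sin (PI / 6) ^ 2 = 1.
Proof. rewrite sin_PI6. field. Qed.

Lemma four_sin2_PI3 : 4 * sin (PI / 3) ^ 2 = 3.
Proof.
  rewrite sin_PI3. replace (4 * (sqrt 3 / 2) ^ 2) with (sqrt 3 * sqrt 3) by field.
  apply sqrt_sqrt; lra.
Qed.

Lemma sum_H2_div_sq_cbin :
  sum_from1_is (fun k => H2 (k - 1) / ((INR k)^2 * cbin k)) (PI^4 / 1944).
Proof.
  pose proof PI_RGT_0.
  replace (PI^4 / 1944) with (2 / 3 * (PI / 6) ^ 4) by field.
  eapply sum_from1_ext; [| apply sum_asin4_coef_sin2; lra].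
  intros k _. rewrite four_sin2_PI6, pow1. unfold asin4_coef. ring.
Qed.

Lemma sum_lucas_H2_div_sq_cbin :
  sum_from1_is (fun k => INR (lucas (2 * k)) * H2 (k - 1) / ((INR k)^2 * cbin k))
    (41 * PI^4 / 7500).
Proof.
  pose proof PI_RGT_0.
  replace (41 * PI^4 / 7500) with (2 / 3 * (1 * (3 * PI / 10) ^ 4 + 1 * (PI / 10) ^ 4)) by field.
  apply sum_H2_weighted; try lra.
  intros k. rewrite four_sin2_3PI10, four_sin2_PI10, lucas_binet, !pow_mult. ring.
Qed.

Lemma sum_fib_H2_div_sq_cbin :
  sum_from1_is (fun k => INR (fib (2 * k)) * H2 (k - 1) / ((INR k)^2 * cbin k))
    (2 * PI^4 / (375 * sqrt 5)).
Proof.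
  pose proof PI_RGT_0. pose proof sqrt5_pos.
  replace (2 * PI^4 / (375 * sqrt 5))
    with (2 / 3 * (/ sqrt 5 * (3 * PI / 10) ^ 4 + (- / sqrt 5) * (PI / 10) ^ 4)) by (field; lra).
  apply sum_H2_weighted; try lra.
  intros k. rewrite four_sin2_3PI10, four_sin2_PI10, fib_binet, !pow_mult. field. lra.
Qed.

Lemma sum_v_seq_H2_div_sq_cbin :
  sum_from1_is (fun k => v_seq k * H2 (k - 1) / ((INR k)^2 * cbin k)) (34 * PI^4 / 1875).
Proof.
  pose proof PI_RGT_0.
  replace (34 * PI^4 / 1875) with (2 / 3 * (1 * (2 * PI / 5) ^ 4 + 1 * (PI / 5) ^ 4)) by field.
  apply sum_H2_weighted; try lra.
  intros k. rewrite four_sin2_2PI5, four_sin2_PI5, v_seq_binet. ring.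
Qed.

Lemma sum_u_seq_H2_div_sq_cbin :
  sum_from1_is (fun k => u_seq k * H2 (k - 1) / ((INR k)^2 * cbin k))
    (2 * PI^4 / (125 * sqrt 5)).
Proof.
  pose proof PI_RGT_0. pose proof sqrt5_pos.
  replace (2 * PI^4 / (125 * sqrt 5))
    with (2 / 3 * (/ sqrt 5 * (2 * PI / 5) ^ 4 + (- / sqrt 5) * (PI / 5) ^ 4)) by (field; lra).
  apply sum_H2_weighted; try lra.
  intros k. rewrite four_sin2_2PI5, four_sin2_PI5, u_seq_binet. field. lra.
Qed.

Lemma sum_H2_pow_div_cbin x : 0 <= x < 4 ->
  sum_from1_is (fun k => H2 (k - 1) * x^k / (INR k * cbin k))
    (4 / 3 * sqrt (x / (4 - x)) * (asin (sqrt x / 2))^3).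
Proof.
  intros Hx.
  set (a := sqrt x / 2).
  assert (Ha0 : 0 <= a) by (unfold a; pose proof (sqrt_pos x); lra).
  assert (Ha2 : a * a = x / 4) by (unfold a; pose proof (sqrt_sqrt x (proj1 Hx)); nra).
  set (t := asin a).
  assert (Ht : -(PI/2) < t < PI/2) by (apply asin_bound_lt; nra).
  assert (Hst : sin t = a) by (apply sin_asin; nra).
  assert (Hc : 0 < cos t) by (apply cos_gt_0; lra).
  assert (Hcs : cos t * cos t = 1 - a * a) by (pose proof (sin_sq t); rewrite Hst in *; lra).
  replace (sqrt (x / (4 - x))) with (tan t).
  - assert (Hxt : 4 * sin t ^ 2 = x) by (rewrite Hst; nra).
    eapply sum_from1_ext; [| exact (sum_H2_sin2 t Ht)].
    intros k _. now rewrite Hxt.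
  - unfold tan. rewrite Hst, <- (sqrt_pow2 (a / cos t)).
    + f_equal. replace x with (4 * (a * a)) by lra.
      replace (4 - 4 * (a * a)) with (4 * (cos t * cos t)) by lra. field. lra.
    + apply Rmult_le_pos; [lra | apply Rlt_le, Rinv_0_lt_compat; lra].
Qed.

Lemma sum_H2_div_cbin :
  sum_from1_is (fun k => H2 (k - 1) / (INR k * cbin k)) (PI^3 / (162 * sqrt 3)).
Proof.
  pose proof PI_RGT_0. assert (0 < sqrt 3) by (apply sqrt_lt_R0; lra).
  replace (PI^3 / (162 * sqrt 3)) with (4 / 3 * tan (PI / 6) * (PI / 6) ^ 3)
    by (rewrite tan_PI6; field; lra).
  eapply sum_from1_ext; [| apply sum_H2_sin2; lra].
  intros k _. rewrite four_sin2_PI6, pow1. unfold Rdiv. ring.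
Qed.

Lemma sum_pow3_H2_div_cbin :
  sum_from1_is (fun k => 3^k * H2 (k - 1) / (INR k * cbin k)) (4 * PI^3 / (27 * sqrt 3)).
Proof.
  pose proof PI_RGT_0. assert (0 < sqrt 3) by (apply sqrt_lt_R0; lra).
  assert (Hsq3 : sqrt 3 * sqrt 3 = 3) by (apply sqrt_sqrt; lra).
  replace (4 * PI^3 / (27 * sqrt 3)) with (4 / 3 * tan (PI / 3) * (PI / 3) ^ 3).
  - eapply sum_from1_ext; [| apply sum_H2_sin2; lra].
    intros k _. rewrite four_sin2_PI3. unfold Rdiv. ring.
  - rewrite tan_PI3.
    replace (4 / 3 * sqrt 3 * (PI / 3) ^ 3) with (4 * (sqrt 3 * sqrt 3) * PI ^ 3 / (81 * sqrt 3))
      by (field; lra).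
    rewrite Hsq3. field. lra.
Qed.

Theorem theorem1p1 :
  (sum_from1_is (fun k => H2 (k - 1) / ((INR k)^2 * cbin k)) (PI^4 / 1944)
   /\ sum_from1_is (fun k => INR (lucas (2 * k)) * H2 (k - 1) / ((INR k)^2 * cbin k))
        (41 * PI^4 / 7500)
   /\ sum_from1_is (fun k => INR (fib (2 * k)) * H2 (k - 1) / ((INR k)^2 * cbin k))
        (2 * PI^4 / (375 * sqrt 5))
   /\ sum_from1_is (fun k => v_seq k * H2 (k - 1) / ((INR k)^2 * cbin k))
        (34 * PI^4 / 1875)
   /\ sum_from1_is (fun k => u_seq k * H2 (k - 1) / ((INR k)^2 * cbin k))
        (2 * PI^4 / (125 * sqrt 5)))
  /\
  ((forall x : R, 0 <= x < 4 ->
      sum_from1_is (fun k => H2 (k - 1) * x^k / (INR k * cbin k))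
        (4 / 3 * sqrt (x / (4 - x)) * (asin (sqrt x / 2))^3))
   /\ sum_from1_is (fun k => H2 (k - 1) / (INR k * cbin k)) (PI^3 / (162 * sqrt 3))
   /\ sum_from1_is (fun k => 3^k * H2 (k - 1) / (INR k * cbin k))
        (4 * PI^3 / (27 * sqrt 3))).
Proof.
  split.
  - repeat split.
    + exact sum_H2_div_sq_cbin.
    + exact sum_lucas_H2_div_sq_cbin.
    + exact sum_fib_H2_div_sq_cbin.
    + exact sum_v_seq_H2_div_sq_cbin.
    + exact sum_u_seq_H2_div_sq_cbin.
  - repeat split.
    + exact sum_H2_pow_div_cbin.
    + exact sum_H2_div_cbin.
    + exact sum_pow3_H2_div_cbin.
Qed.
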